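(* Let $\Sigma$ be an alphabet of size $d\ge 2$, let $\delta\in[0,1/d)$, and let $N$ be a $\delta$-upper bounded noise matrix on $\Sigma$. Let $\delta'=f(\delta)$. There exists a stochastic matrix $P=P(N,\delta)$ such that, for any protocol $\mathcal{A}$, the simulation of $\mathcal{A}$ with artificial noise $P$ under noise $N$ has the same distribution as $\mathcal{A}$ run under the $\delta'$-uniform noise matrix. In particular, for every displayed message $i\in\Sigma$, the message obtained by applying $N$ and then $P$ equals $j$ with probability $T_{i,j}$, where $T$ is the $\delta'$-uniform matrix.
   Context: A $d\times d$ matrix is stochastic if its entries are non-negative and each row sums to $1$. For $\delta\in[0,1/d]$, a stochastic matrix $N$ indexed by $\Sigma$ is: - $\delta$-upper bounded if $N_{\sigma,\sigma}\ge1-(d-1)\delta$ for all $\sigma$ and $N_{\sigma,\sigma'}\le\delta$ for all $\sigma\ne\sigma'$; - $\delta$-uniform if $N_{\sigma,\sigma}=1-(d-1)\delta$ and $N_{\sigma,\sigma'}=\delta$ for all $\sigma\ne\sigma'$. Noise matrices act on messages: when a message $\sigma$ is observed through noise $N$, the observer receives $\sigma'$ with probability $N_{\sigma,\sigma'}$, independently across observations. Simulation of a protocol $\mathcal{A}$ with artificial noise $P$: in every round, each agent replaces every received message $i$ by a random $\sigma\in\Sigma$ with $\Pr(\sigma=j)=P_{ij}$, independently, and then applies $\mathcal{A}$ to the modified messages. The function $f:[0,1/d)\to\mathbb{R}$ is defined by $f(0)=0$ and, for $\delta\in(0,1/d)$, $$f(\delta)=\left(d+\frac{1}{2}\cdot\frac{1}{(d-1)^2}\cdot\frac{1-d\delta}{\delta}\right)^{-1}.$$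 *)

(* Alphabet Sigma = 'I_d, noise matrices = 'M[R]_d. *)
From HB Require Import structures.
From mathcomp Require Import all_boot all_order all_algebra.
Set Implicit Arguments. Unset Strict Implicit. Unset Printing Implicit Defensive.
Import Order.TTheory GRing.Theory Num.Theory.
Local Open Scope ring_scope.

Definition stochastic (R : realFieldType) (d : nat) (M : 'M[R]_d) : Prop :=
  (forall i j, 0 <= M i j) /\ (forall i, \sum_(j < d) M i j = 1).

Definition upper_bounded (R : realFieldType) (d : nat) (delta : R) (N : 'M[R]_d) : Prop :=
  stochastic N /\
  (forall s, 1 - (d%:R - 1) * delta <= N s s) /\
  (forall s s', s != s' -> N s s' <= delta).

Definition uniform_mx (R : realFieldType) (d : nat) (delta : R) : 'M[R]_d :=
  \matrix_(s, s') (if s == s' then 1 - (d%:R - 1) * delta else delta).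

Definition fdelta (R : realFieldType) (d : nat) (delta : R) : R :=
  if delta == 0 then 0
  else (d%:R + 2^-1 * (1 / (d%:R - 1) ^+ 2) * ((1 - d%:R * delta) / delta))^-1.

(* Probability that the displayed messages s (n independent observations) are
   received as r, when each is passed through noise N and then through the
   artificial noise P independently. *)
Definition two_stage_prob (R : realFieldType) (d n : nat) (N P : 'M[R]_d)
  (s r : n.-tuple 'I_d) : R :=
  \prod_(t < n) \sum_(k < d) N (tnth s t) k * P k (tnth r t).

Definition one_stage_prob (R : realFieldType) (d n : nat) (M : 'M[R]_d)
  (s r : n.-tuple 'I_d) : R :=
  \prod_(t < n) M (tnth s t) (tnth r t).

From HB Require Import structures.
From mathcomp Require Import all_boot all_order all_algebra.
From mathcomp Require Import ring lra.
Import Order.TTheory GRing.Theory Num.Theory.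
Local Open Scope ring_scope.

(* Let J be the all-ones matrix and G := N - delta J.  G has nonpositive
   off-diagonal entries and constant row sums 1 - d delta > 0, so it is
   invertible with G^-1 >= 0, and N^-1 = G^-1 - delta J G^-1 has all entries
   >= - d delta / (1 - d delta).  Since N^-1 fixes J, the artificial noise
   P := N^-1 T for the target T = (1 - d delta') I + delta' J equals
   (1 - d delta') N^-1 + delta' J, which is nonnegative as soon as
   d delta (1 - d delta') <= delta' (1 - d delta); delta' = f(delta)
   satisfies this because d <= 2 (d - 1)^2. *)

Lemma mulmx_constE {R : pzSemiRingType} {m n p} (A : 'M[R]_(m, n)) (c : R) i j :
  (A *m (const_mx c : 'M_(n, p))) i j = (\sum_k A i k) * c.
Proof. by rewrite mxE mulr_suml; apply: eq_bigr => k _; rewrite mxE. Qed.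

Lemma stochastic_mulmx_const1 {R : realFieldType} {d} p {M : 'M[R]_d} :
  stochastic M -> M *m const_mx 1 = const_mx 1 :> 'M_(d, p).
Proof. by case=> _ M_row; apply/matrixP=> i j; rewrite mulmx_constE M_row mulr1 mxE. Qed.

Lemma invmx_eigen {R : fieldType} {n p} {A : 'M[R]_n} {v : 'M_(n, p)} {a : R} :
  A \in unitmx -> a != 0 -> A *m v = a *: v -> invmx A *m v = a^-1 *: v.
Proof.
move=> A_unit a_neq0 Av.
by rewrite -[v in LHS](scalerK a_neq0) -scalemxAr -Av mulKmx.
Qed.

Section ZMatrix.
Variables (R : realFieldType) (n : nat) (G : 'M[R]_n).
Hypothesis G_offdiag_le0 : forall i j, i != j -> G i j <= 0.
Hypothesis G_rowsum_gt0 : forall i, 0 < \sum_j G i j.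

Lemma Zmx_mulmx_ge0 p (X : 'M_(n, p)) :
  (forall i j, 0 <= (G *m X) i j) -> forall i j, 0 <= X i j.
Proof.
move=> GX_ge0 i c.
(* Look at the row of [G *m X] where column c of X is minimal. *)
have [k _ k_min] := @arg_minP _ R _ i xpredT (fun k => X k c) isT.
apply: le_trans (k_min i isT).
have GX_le : (G *m X) k c <= (\sum_j G k j) * X k c.
  rewrite mxE mulr_suml; apply: ler_sum => j _.
  have [-> //|j_neq_k] := eqVneq j k.
  rewrite -subr_ge0 -mulrBr mulr_le0 ?subr_le0 ?k_min //.
  by rewrite G_offdiag_le0 // eq_sym.
by have := le_trans (GX_ge0 k c) GX_le; rewrite pmulr_rge0.
Qed.

Lemma Zmx_unit : G \in unitmx.
Proof.
rewrite -unitmx_tr unitmxE unitfE; apply/negP => /det0P [v v_neq0 vG].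
have Gv : G *m v^T = 0 by rewrite -[G]trmxK -trmx_mul vG trmx0.
have v_ge0 : forall i j, 0 <= v^T i j.
  by apply: Zmx_mulmx_ge0 => i j; rewrite Gv mxE.
have v_le0 : forall i j, 0 <= (- v^T) i j.
  by apply: Zmx_mulmx_ge0 => i j; rewrite mulmxN Gv oppr0 mxE.
move/eqP: v_neq0; apply; apply/matrixP => i j; apply/le_anti.
by have := v_ge0 j i; have := v_le0 j i; rewrite !mxE oppr_ge0 => -> ->.
Qed.

Lemma Zmx_invmx_ge0 i j : 0 <= invmx G i j.
Proof. by apply: Zmx_mulmx_ge0 => {}i {}j; rewrite mulmxV ?Zmx_unit // mxE ler0n. Qed.

End ZMatrix.

Lemma sum_col_le {R : realFieldType} {m n} {X : 'M[R]_(m, n)} {r : R} :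
  (forall i j, 0 <= X i j) -> (forall i, \sum_j X i j <= r) ->
  forall j, \sum_i X i j <= m%:R * r.
Proof.
move=> X_ge0 X_row j.
have -> : m%:R * r = \sum_(i < m) r by rewrite sumr_const card_ord mulr_natl.
apply: ler_sum => i _; apply: le_trans (X_row i).
by rewrite (bigD1 j) //= lerDl sumr_ge0.
Qed.

Lemma uniform_mxE (R : realFieldType) d (e : R) :
  uniform_mx d e = (1 - d%:R * e)%:M + e *: const_mx 1.
Proof.
apply/matrixP => i j; rewrite !mxE mulr1.
by case: (i == j); rewrite ?mulr1n ?mulr0n; ring.
Qed.

Section InverseOfNoise.
Context {R : realFieldType} {d : nat} {delta : R} {N : 'M[R]_d}.
Hypothesis N_stochastic : stochastic N.
Hypothesis N_offdiag_le : forall i j, i != j -> N i j <= delta.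
Hypothesis delta_ge0 : 0 <= delta.
Hypothesis d_delta_lt1 : d%:R * delta < 1.

Local Notation J := (const_mx 1 : 'M[R]_d).
Let G := N - delta *: J.
Let invN := invmx G - delta *: (J *m invmx G).

Let G_offdiag_le0 i j : i != j -> G i j <= 0.
Proof. by move=> ij; rewrite !mxE mulr1 subr_le0 N_offdiag_le. Qed.

Let G_rowsum i : \sum_j G i j = 1 - d%:R * delta.
Proof.
under eq_bigr do rewrite !mxE mulr1.
by rewrite sumrB N_stochastic.2 sumr_const card_ord mulr_natl.
Qed.

Let G_unit : G \in unitmx.
Proof. by apply: Zmx_unit => // i; rewrite G_rowsum subr_gt0. Qed.

Let invG_ge0 i j : 0 <= invmx G i j.
Proof. by apply: Zmx_invmx_ge0 => // {}i; rewrite G_rowsum subr_gt0. Qed.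

Let invG_rowsum i : \sum_j invmx G i j = (1 - d%:R * delta)^-1.
Proof.
have b_neq0 : 1 - d%:R * delta != 0 by rewrite subr_eq0 eq_sym lt_eqF.
have G1 : G *m const_mx 1 = (1 - d%:R * delta) *: (const_mx 1 : 'cV_d).
  by apply/matrixP => k l; rewrite mulmx_constE G_rowsum !mxE !mulr1.
have := congr1 (fun M : 'cV_d => M i 0) (invmx_eigen G_unit b_neq0 G1).
by rewrite /= mulmx_constE !mxE !mulr1.
Qed.

Let mulmx_invN : N *m invN = 1%:M.
Proof.
have N_def : N = G + delta *: J by rewrite subrK.
rewrite mulmxBr -scalemxAr mulmxA stochastic_mulmx_const1 //.
by rewrite {1}N_def mulmxDl mulmxV // -scalemxAl addrK.
Qed.

Let invN_mulmx_const1 p : invN *m const_mx 1 = const_mx 1 :> 'M_(d, p).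
Proof.
rewrite -[in LHS](stochastic_mulmx_const1 p N_stochastic) mulmxA.
by rewrite (mulmx1C mulmx_invN) mul1mx.
Qed.

Let invN_entry i j : invN i j = invmx G i j - delta * \sum_k invmx G k j.
Proof. by rewrite !mxE; congr (_ - _ * _); apply: eq_bigr => k _; rewrite mxE mul1r. Qed.

Let invN_ge i j : - (d%:R * delta / (1 - d%:R * delta)) <= invN i j.
Proof.
have rowsum_le k : \sum_l invmx G k l <= (1 - d%:R * delta)^-1.
  by rewrite invG_rowsum.
have := ler_wpM2l delta_ge0 (sum_col_le invG_ge0 rowsum_le j).
have := invG_ge0 i j.
rewrite invN_entry; lra.
Qed.

Lemma exists_stochastic_mulmx_uniform {e : R} :
  d%:R * e <= 1 -> d%:R * delta * (1 - d%:R * e) <= e * (1 - d%:R * delta) ->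
  exists P, stochastic P /\ N *m P = uniform_mx d e.
Proof.
rewrite -subr_ge0 => de_le1 e_large.
exists (invN *m uniform_mx d e); split; last by rewrite mulmxA mulmx_invN mul1mx.
have P_entry k j : (invN *m uniform_mx d e) k j = (1 - d%:R * e) * invN k j + e.
  by rewrite uniform_mxE mulmxDr mul_mx_scalar -scalemxAr invN_mulmx_const1 !mxE mulr1 mulrC.
split => [k j | k].
- rewrite P_entry.
  have b_gt0 : 0 < 1 - d%:R * delta by rewrite subr_gt0.
  have := ler_wpM2l de_le1 (invN_ge k j).
  have : d%:R * delta * (1 - d%:R * e) / (1 - d%:R * delta) <= e.
    by rewrite ler_pdivrMr.
  lra.
- have := congr1 (fun M : 'cV_d => M k 0) (invN_mulmx_const1 1).
  rewrite /= mulmx_constE mxE mulr1 => invN_rowsum.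
  under eq_bigr do rewrite P_entry.
  by rewrite big_split /= -mulr_sumr invN_rowsum sumr_const card_ord -mulr_natr; ring.
Qed.

End InverseOfNoise.

Lemma fdeltaE (R : realFieldType) d (delta : R) :
  (2 <= d)%N -> 0 < delta -> d%:R * delta < 1 ->
  fdelta d delta = 2 * (d%:R - 1) ^+ 2 * delta
                   / (2 * (d%:R - 1) ^+ 2 * delta * d%:R + (1 - d%:R * delta)).
Proof.
move=> d_ge2 delta_gt0 d_delta_lt1.
have d_ge2R : (2 : R) <= d%:R by rewrite (ler_nat R 2 d).
have cdd_ge0 : 0 <= 2 * (d%:R - 1) ^+ 2 * delta * d%:R.
  by rewrite !mulr_ge0 ?sqr_ge0 ?ler0n ?ltW //; lra.
have D_neq0 : 2 * (d%:R - 1) ^+ 2 * delta * d%:R + (1 - d%:R * delta) != 0.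
  by apply: lt0r_neq0; lra.
have d1_neq0 : d%:R - 1 != 0 :> R by apply: lt0r_neq0; lra.
by rewrite /fdelta gt_eqF //; field; rewrite D_neq0 d1_neq0 gt_eqF.
Qed.

Lemma fdelta_bounds {R : realFieldType} {d} {delta : R} :
  (2 <= d)%N -> 0 <= delta -> d%:R * delta < 1 ->
  d%:R * fdelta d delta <= 1 /\
  d%:R * delta * (1 - d%:R * fdelta d delta) <= fdelta d delta * (1 - d%:R * delta).
Proof.
move=> d_ge2 delta_ge0 d_delta_lt1.
have [<-|delta_neq0] := eqVneq 0 delta.
  by rewrite /fdelta eqxx /= !(mulr0, mul0r) ler01.
have delta_gt0 : 0 < delta by rewrite lt_def eq_sym delta_neq0.
rewrite fdeltaE //; set c := 2 * _; set b := 1 - _; set D := _ + b.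
have d_ge2R : (2 : R) <= d%:R by rewrite (ler_nat R 2 d).
have b_gt0 : 0 < b by rewrite subr_gt0.
have cd_ge0 : 0 <= c * delta * d%:R by rewrite !mulr_ge0 ?ltW //; lra.
have D_gt0 : 0 < D by rewrite /D; lra.
have d_le_c : d%:R <= c by rewrite /c; nra.
have -> : 1 - d%:R * (c * delta / D) = b / D by rewrite /D; field; rewrite gt_eqF.
split; first by rewrite mulrA ler_pdivrMr // mul1r /D; lra.
rewrite mulrA [_ / D * b]mulrAC ler_pM2r ?invr_gt0 //.
have : 0 <= delta * b by rewrite mulr_ge0 ?ltW.
nra.
Qed.

Theorem theorem8 (R : realFieldType) (d : nat) (delta : R) (N : 'M[R]_d) :
  (2 <= d)%N -> 0 <= delta -> delta < 1 / d%:R -> upper_bounded delta N ->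
  exists P : 'M[R]_d,
    stochastic P /\
    (forall i j : 'I_d,
        \sum_(k < d) N i k * P k j = uniform_mx d (fdelta d delta) i j) /\
    (forall (n : nat) (s r : n.-tuple 'I_d),
        two_stage_prob N P s r = one_stage_prob (uniform_mx d (fdelta d delta)) s r).
Proof.
(* The diagonal bound of [upper_bounded] follows from the other two conditions. *)
move=> d_ge2 delta_ge0 delta_lt [N_stochastic [_ N_offdiag_le]].
have d_delta_lt1 : d%:R * delta < 1.
  by rewrite mulrC -ltr_pdivlMr ?ltr0n 1?ltnW // mul1r.
have [fd_le1 fd_large] := fdelta_bounds d_ge2 delta_ge0 d_delta_lt1.
have [P [P_stochastic NP]] := exists_stochastic_mulmx_uniform N_stochastic
  N_offdiag_le delta_ge0 d_delta_lt1 fd_le1 fd_large.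
have NP_entry i j : \sum_k N i k * P k j = uniform_mx d (fdelta d delta) i j.
  by rewrite -NP mxE.
exists P; split; [done | split; first exact: NP_entry].
by move=> n s r; apply: eq_bigr => t _; exact: NP_entry.
Qed.
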